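(* Let $n$ be even and let $\mathcal{J}\subseteq H(F_n)$ be the Jordan subalgebra $$\mathcal{J}=\left\{\begin{pmatrix} A & B\\ -B & A\end{pmatrix} : A\in F_{n/2} \text{ symmetric},\ B\in F_{n/2}\text{ skew-symmetric}\right\}.$$ Then every automorphism of the Jordan algebra $\mathcal{J}$ is induced by (i.e. is the restriction of) an automorphism of the Jordan algebra $H(F_n)$.
   Context: $F$ is an algebraically closed field of characteristic different from $2$. $F_k$ denotes the algebra of $k\times k$ matrices over $F$, $F_k^{(+)}$ is the Jordan algebra on $F_k$ with product $X\odot Y=\frac{XY+YX}{2}$, and $H(F_n)$ is the Jordan subalgebra of $F_n^{(+)}$ consisting of all symmetric matrices ($X^t=X$). The algebra $\mathcal{J}$ above is isomorphic to $F_{n/2}^{(+)}$ (via $A+iB\mapsto$ the displayed block matrix, $i^2=-1$). *)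

From HB Require Import structures.
From mathcomp Require Import all_boot all_order all_algebra.
Set Implicit Arguments. Unset Strict Implicit. Unset Printing Implicit Defensive.
Import GRing.Theory.
Local Open Scope ring_scope.

Definition jprod (F : fieldType) (k : nat) (X Y : 'M[F]_k) : 'M[F]_k :=
  2%:R^-1 *: (X *m Y + Y *m X).

Definition symmx (F : fieldType) (k : nat) (X : 'M[F]_k) : Prop := X^T = X.

Definition in_J (F : fieldType) (m : nat) (X : 'M[F]_(m + m)) : Prop :=
  exists (A B : 'M[F]_m), A^T = A /\ B^T = - B /\ X = block_mx A B (- B) A.

Definition jordan_aut_on (F : fieldType) (k : nat) (S : 'M[F]_k -> Prop)
  (f : 'M[F]_k -> 'M[F]_k) : Prop :=
  [/\ (forall X, S X -> S (f X)),
      (forall (a : F) X Y, S X -> S Y -> f (a *: X + Y) = a *: f X + f Y),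
      (forall X Y, S X -> S Y -> f (jprod X Y) = jprod (f X) (f Y)),
      (forall X Y, S X -> S Y -> f X = f Y -> X = Y) &
      (forall Y, S Y -> exists X, S X /\ f X = Y)].

From HB Require Import structures.
From mathcomp Require Import all_boot all_order all_algebra.
From mathcomp Require Import ring.
Set Implicit Arguments. Unset Strict Implicit. Unset Printing Implicit Defensive.
Import GRing.Theory.
Local Open Scope ring_scope.

(* With i^2 = -1 and U = [[1, 1], [i, -i]], the map Z |-> U diag(Z, Z^T) U^-1 is a
   Jordan isomorphism from F_m^(+) onto J, so an automorphism of J is a Jordan
   automorphism psi of F_m^(+).  The images E_ij of the matrix units under psi obey
   the Jordan relations of matrix units; since F_m is prime they either all multiply
   like matrix units or all like transposed ones, and a system of matrix units is
   conjugate to the standard one.  Hence psi Z = S Z S^-1 or psi Z = S Z^T S^-1.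
   Then D = diag(S, S^-T), resp. antidiag(S, S^-T), preserves the form
   [[0, 1], [1, 0]] = U^T U / 2 and intertwines diag(Z, Z^T) with
   diag(psi Z, (psi Z)^T), so Q = U D U^-1 is orthogonal and X |-> Q X Q^T is an
   automorphism of H(F_n) extending the given one. *)

Section MatrixFacts.
Variable F : fieldType.

Lemma mulr2n_eq0 (V : lmodType F) (v : V) : 2%:R != 0 :> F -> v *+ 2 = 0 -> v = 0.
Proof.
move=> two_neq0 v2; have : (2%:R : F) *: v == 0 by rewrite scaler_nat v2.
by rewrite scaler_eq0 (negPf two_neq0) => /eqP.
Qed.

Section Idempotent.
Variables (m : nat) (e x : 'M[F]_m).
Hypothesis e_idem : e *m e = e.

Lemma idem_anticomm0 : 2%:R != 0 :> F ->
  e *m x + x *m e = 0 -> e *m x = 0 /\ x *m e = 0.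
Proof.
move=> two_neq0 anti.
have l : e *m x + e *m x *m e = 0.
  by have := congr1 (mulmx e) anti; rewrite mulmxDr !mulmxA e_idem mulmx0.
have r : e *m x *m e + x *m e = 0.
  by have := congr1 (mulmx^~ e) anti; rewrite /= mulmxDl -(mulmxA x) e_idem mul0mx.
have comm : e *m x = x *m e by apply: (addIr (e *m x *m e)); rewrite l addrC r.
have ex0 : e *m x = 0 by apply: (mulr2n_eq0 two_neq0); rewrite mulr2n {2}comm.
by rewrite -comm.
Qed.

Lemma idem_half_sandwich0 : e *m x + x *m e = x -> e *m x *m e = 0.
Proof.
move=> half; apply: (addrI (e *m x)); rewrite addr0.
by have := congr1 (mulmx e) half; rewrite mulmxDr !mulmxA e_idem.
Qed.

End Idempotent.

Lemma mulmx_delta_entry m n p q (A : 'M[F]_(m, n)) (B : 'M[F]_(p, q)) a b c d :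
  (A *m delta_mx b c *m B) a d = A a b * B c d.
Proof.
rewrite mxE (bigD1 c) //= big1 => [|k kc]; last first.
  by rewrite mxE big1 ?mul0r // => l _; rewrite mxE (negPf kc) andbF mulr0.
rewrite addr0 mxE (bigD1 b) //= big1 => [|l lb]; last by rewrite mxE (negPf lb) mulr0.
by rewrite addr0 !mxE !eqxx mulr1.
Qed.

Lemma matrix_nz_entry m n (A : 'M[F]_(m, n)) : A != 0 -> exists a b, A a b != 0.
Proof.
move=> A_neq0; have [/existsP[a /existsP[b Aab]] | nz] :=
  boolP [exists a, exists b, A a b != 0]; first by exists a, b.
case/eqP: A_neq0; apply/matrixP => a b; rewrite mxE; apply/eqP/negPn/negP => Aab.
by case/negP: nz; apply/existsP; exists a; apply/existsP; exists b.
Qed.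

Lemma matrix_prime m (A B : 'M[F]_m) :
  (forall M, A *m M *m B = 0) -> A = 0 \/ B = 0.
Proof.
move=> AMB0; have [->|A_neq0] := eqVneq A 0; [by left | right].
have [a [b Aab]] := matrix_nz_entry A_neq0.
apply/matrixP => c d; have /matrixP/(_ a d) := AMB0 (delta_mx b c).
rewrite mulmx_delta_entry !mxE => /eqP; rewrite mulf_eq0 (negPf Aab).
by move/eqP.
Qed.

Lemma unitmx_ker0 n (A : 'M[F]_n) :
  (forall w : 'cV_n, A *m w = 0 -> w = 0) -> A \in unitmx.
Proof.
move=> A_inj; rewrite unitmxE unitfE -det_tr.
apply/negP => /det0P[v /negP v_neq0 vA]; apply: v_neq0; apply/eqP.
by rewrite -[v]trmxK (A_inj v^T) ?trmx0 // -[A]trmxK -trmx_mul vA trmx0.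
Qed.

End MatrixFacts.

Definition matrix_units (F : fieldType) m (E : 'I_m -> 'I_m -> 'M[F]_m) :=
  forall i j k l, E i j *m E k l = E i l *+ (j == k).

Definition jordan_matrix_units (F : fieldType) m (E : 'I_m -> 'I_m -> 'M[F]_m) :=
  forall i j k l,
    E i j *m E k l + E k l *m E i j = E i l *+ (j == k) + E k j *+ (l == i).

Section JordanMatrixUnits.
Variables (F : fieldType) (m : nat) (E : 'I_m -> 'I_m -> 'M[F]_m).
Hypotheses (two_neq0 : 2%:R != 0 :> F) (E_jordan : jordan_matrix_units E).

Lemma jmu_idem i : E i i *m E i i = E i i.
Proof.
have := E_jordan i i i i; rewrite eqxx -!mulr2n => E2.
apply/eqP; rewrite -subr_eq0; apply/eqP/(mulr2n_eq0 two_neq0).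
by rewrite mulrnBl E2 subrr.
Qed.

Lemma jmu_orth j k l : j != k -> j != l -> E j j *m E k l = 0 /\ E k l *m E j j = 0.
Proof.
move=> jk jl; apply: (idem_anticomm0 (jmu_idem j) two_neq0).
by rewrite E_jordan (negPf jk) eq_sym (negPf jl) !mulr0n addr0.
Qed.

Lemma jmu_half_l i j : i != j -> E i i *m E i j + E i j *m E i i = E i j.
Proof. by move=> ij; rewrite E_jordan eqxx eq_sym (negPf ij) mulr0n addr0. Qed.

Lemma jmu_half_r i j : i != j -> E j j *m E i j + E i j *m E j j = E i j.
Proof. by move=> ij; rewrite E_jordan eqxx eq_sym (negPf ij) mulr0n add0r. Qed.

Lemma jmu_idem_swap_l i j : i != j -> E i i *m E i j = E i j *m E j j.
Proof.
move=> ij; have [ii_jj _] := jmu_orth ij ij.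
transitivity (E i i *m E i j *m E j j).
  by rewrite -{1}(jmu_half_r ij) mulmxDr !mulmxA ii_jj mul0mx add0r.
by rewrite -{2}(jmu_half_l ij) mulmxDl -(mulmxA (E i j)) ii_jj mulmx0 addr0.
Qed.

Lemma jmu_idem_swap_r i j : i != j -> E i j *m E i i = E j j *m E i j.
Proof.
move=> ij; have [_ jj_ii] := jmu_orth ij ij.
transitivity (E j j *m E i j *m E i i).
  by rewrite -{1}(jmu_half_r ij) mulmxDl -(mulmxA (E i j)) jj_ii mulmx0 addr0.
by rewrite -{2}(jmu_half_l ij) mulmxDr !mulmxA jj_ii mul0mx add0r.
Qed.

Lemma jmu_sqr0 i j : i != j -> E i j *m E i j = 0.
Proof.
move=> ij; apply: (mulr2n_eq0 two_neq0).
by rewrite mulr2n E_jordan eq_sym (negPf ij) !mulr0n addr0.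
Qed.

Lemma jmu_sandwich j k l :
  E j j *m E k l *m E j j = E j j *+ ((k == j) && (l == j)).
Proof.
have [-> | kj] := eqVneq k j; have [-> | lj] := eqVneq l j => /=.
- by rewrite !jmu_idem mulr1n.
- by rewrite mulr0n (idem_half_sandwich0 (jmu_idem j)) // jmu_half_l // eq_sym.
- by rewrite mulr0n (idem_half_sandwich0 (jmu_idem j)) // jmu_half_r.
- by rewrite mulr0n (proj1 (jmu_orth _ _)) ?mul0mx // eq_sym.
Qed.

Lemma matrix_units_of_jmu :
  (forall i j, i != j -> E i j *m E i i = 0) -> matrix_units E.
Proof.
move=> hom.
have idemL i j : E i i *m E i j = E i j.
  have [<- | ij] := eqVneq i j; first exact: jmu_idem.
  by rewrite -{2}(jmu_half_l ij) hom // addr0.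
have idemR i j : E i j *m E j j = E i j.
  have [<- | ij] := eqVneq i j; first exact: jmu_idem.
  by rewrite -jmu_idem_swap_l.
have orth i j k l : j != k -> E i j *m E k l = 0.
  move=> jk; rewrite -(idemR i j) -(idemL k l) -mulmxA (mulmxA (E j j)).
  by rewrite (proj1 (jmu_orth jk jk)) mul0mx mulmx0.
move=> i j k l; have [<- | jk] := eqVneq j k; last by rewrite mulr0n orth.
rewrite mulr1n; have [-> | li] := eqVneq l i.
  have [<- | ij] := eqVneq i j; first exact: jmu_idem.
  have t1 : E i i *m (E i j *m E j i) *m E i i = E i j *m E j i.
    by rewrite mulmxA idemL -mulmxA idemR.
  have t2 : E i i *m (E j i *m E i j) *m E i i = 0.
    by rewrite mulmxA (orth i i j i ij) !mul0mx.
  have := congr1 (fun M => E i i *m M *m E i i) (E_jordan i j j i).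
  rewrite /= mulmxDr mulmxDl t1 t2 addr0 => ->.
  by rewrite !eqxx mulmxDr mulmxDl !jmu_sandwich eqxx [j == i]eq_sym (negPf ij) addr0.
have := E_jordan i j j l; rewrite eqxx (negPf li) mulr0n addr0 mulr1n => <-.
by rewrite (orth j l i j li) addr0.
Qed.

Hypotheses (E_neq0 : forall i j, E i j != 0)
  (E_sandwich : forall j M, exists c, E j j *m M *m E j j = c *: E j j).

(* [E i j *m E i i = 0] is how matrix units multiply, [E i i *m E i j = 0] how
   transposed ones do.  The sandwich below is E_ij (E_jj M E_jj) E_ij, a multiple
   of E_ij E_jj E_ij = E_ii E_ij^2 = 0. *)
Lemma jmu_dichotomy i j : i != j -> E i j *m E i i = 0 \/ E i i *m E i j = 0.
Proof.
move=> ij.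
have sand M : (E i i *m E i j) *m M *m (E i j *m E i i) = 0.
  have [c Ec] := E_sandwich j M.
  rewrite (jmu_idem_swap_l ij) (jmu_idem_swap_r ij).
  have -> : E i j *m E j j *m M *m (E j j *m E i j) =
            E i j *m (E j j *m M *m E j j) *m E i j by rewrite !mulmxA.
  rewrite Ec -scalemxAr -scalemxAl -(jmu_idem_swap_l ij) -mulmxA jmu_sqr0 //.
  by rewrite mulmx0 scaler0.
by case: (matrix_prime sand) => ->; [right | left].
Qed.

Lemma jmu_hom_anti_excl i j k : i != j -> j != k ->
  E i j *m E i i = 0 -> E j j *m E j k = 0 -> False.
Proof.
move=> ij jk hom anti.
have x_right : E i j = E i j *m E j j.
  by rewrite -jmu_idem_swap_l // -{1}(jmu_half_l ij) hom addr0.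
have jj_x : E j j *m E i j = 0 by rewrite -jmu_idem_swap_r.
have y_right : E j k = E j k *m E j j by rewrite -{1}(jmu_half_l jk) anti add0r.
have xy : E i j *m E j k = 0 by rewrite x_right -mulmxA anti mulmx0.
have yx : E j k *m E i j = 0 by rewrite y_right -mulmxA jj_x mulmx0.
have := E_jordan i j j k; rewrite xy yx addr0 eqxx mulr1n => /esym.
have [-> | ki] := eqVneq k i; last by rewrite mulr0n addr0; apply/eqP.
move/(congr1 (mulmx (E i i))); rewrite mulmxDr jmu_idem (proj1 (jmu_orth ij ij)).
by rewrite addr0 mulmx0; apply/eqP.
Qed.

Lemma jmu_hom_propagate i j k : i != j -> j != k ->
  E i j *m E i i = 0 -> E j k *m E j j = 0.
Proof.
move=> ij jk hom; case: (jmu_dichotomy jk) => // anti.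
by case: (jmu_hom_anti_excl ij jk hom anti).
Qed.

Lemma jmu_hom_all i j : i != j -> E i j *m E i i = 0 ->
  forall k l, k != l -> E k l *m E k k = 0.
Proof.
move=> ij hom k l; have [<- | jk] := eqVneq j k => kl.
  exact: jmu_hom_propagate ij kl hom.
exact: jmu_hom_propagate jk kl (jmu_hom_propagate ij jk hom).
Qed.

End JordanMatrixUnits.

Lemma jordan_matrix_units_tr (F : fieldType) m (E : 'I_m -> 'I_m -> 'M[F]_m) :
  jordan_matrix_units E -> jordan_matrix_units (fun i j => E j i).
Proof.
by move=> E_jordan i j k l; rewrite E_jordan addrC [k == j]eq_sym [i == l]eq_sym.
Qed.

Lemma jordan_matrix_units_split (F : fieldType) m (E : 'I_m -> 'I_m -> 'M[F]_m) :
  2%:R != 0 :> F -> jordan_matrix_units E -> (forall i j, E i j != 0) ->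
  (forall j M, exists c, E j j *m M *m E j j = c *: E j j) ->
  matrix_units E \/ matrix_units (fun i j => E j i).
Proof.
move=> two_neq0 E_jordan E_neq0 E_sandwich.
have [/forallP hom | /forallPn[i /forallPn[j]]] :=
  boolP [forall i, forall j, (i != j) ==> (E i j *m E i i == 0)].
  left; apply: matrix_units_of_jmu => // i j ij.
  by have /forallP/(_ j) := hom i; rewrite ij => /eqP.
rewrite negb_imply => /andP[ij /eqP not_hom]; right.
have anti : E i i *m E i j = 0.
  by case: (jmu_dichotomy two_neq0 E_jordan E_sandwich ij).
have Et_hom : E i j *m E j j = 0 by rewrite -jmu_idem_swap_l.
apply: matrix_units_of_jmu => //; first exact: jordan_matrix_units_tr.
apply: (jmu_hom_all two_neq0 (jordan_matrix_units_tr E_jordan) _ _ _ Et_hom).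
- by move=> k l; apply: E_neq0.
- exact: E_sandwich.
- by rewrite eq_sym.
Qed.

Lemma matrix_units_conj (F : fieldType) m (E : 'I_m -> 'I_m -> 'M[F]_m) :
  matrix_units E -> (forall i, E i i != 0) ->
  exists2 S, S \in unitmx & forall i j, E i j *m S = S *m delta_mx i j.
Proof.
(* The columns of S are the E k 0 *m x for a nonzero column x of E 0 0. *)
case: m E => [|n] E EE E_neq0; first by exists 1%:M; [exact: unitmx1 | case].
have [a [b Eab]] := matrix_nz_entry (E_neq0 0).
pose x := E 0 0 *m delta_mx b (0 : 'I_1).
have xa : x a 0 != 0 by rewrite /x -colE mxE.
pose S := \matrix_(r, k) (E k 0 *m x) r 0.
have colS k : col k S = E k 0 *m x by apply/matrixP => r c; rewrite !mxE (ord1 c).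
have ES i j : E i j *m S = S *m delta_mx i j.
  apply/matrixP => r k; transitivity (col k (E i j *m S) r 0).
    by rewrite [in RHS]mxE.
  rewrite colE -mulmxA -colE colS mulmxA EE.
  rewrite -[S *m _]mulmx1 mulmx_delta_entry !mxE; case: (j == k).
    by rewrite mulr1n mulr1.
  by rewrite mulr0n mulr0 big1 // => t _; rewrite mxE mul0r.
exists S => //; apply: unitmx_ker0 => w Sw; apply/matrixP => l c.
have /matrixP/(_ a 0) := congr1 (mulmx (E 0 l)) Sw.
rewrite (ord1 c) mulmxA ES mulmx0 mulmx_delta_entry [S a 0]mxE mulmxA EE mulr1n.
by rewrite [X in _ = X]mxE => /eqP; rewrite mulf_eq0 (negPf xa) mxE => /eqP.
Qed.

Lemma sum_matrix_units_conj (F : fieldType) m (E : 'I_m -> 'I_m -> 'M[F]_m) S :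
  (forall i j, E i j *m S = S *m delta_mx i j) ->
  forall Z : 'M_m, (\sum_i \sum_j Z i j *: E i j) *m S = S *m Z.
Proof.
move=> ES Z; rewrite {2}(matrix_sum_delta Z) mulmx_suml mulmx_sumr.
apply: eq_bigr => i _; rewrite mulmx_suml mulmx_sumr.
by apply: eq_bigr => j _; rewrite -scalemxAl -scalemxAr ES.
Qed.

Section JordanAutomorphism.
Variables (F : fieldType) (m : nat) (psi : {linear 'M[F]_m -> 'M[F]_m}).
Hypotheses (two_neq0 : 2%:R != 0 :> F)
  (psi_jordan : forall X Y, psi (X *m Y + Y *m X) = psi X *m psi Y + psi Y *m psi X)
  (psi_inj : injective psi) (psi_surj : forall Y, exists X, psi X = Y).

Let E i j := psi (delta_mx i j).

Let psi_expand Z : psi Z = \sum_i \sum_j Z i j *: E i j.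
Proof.
rewrite {1}(matrix_sum_delta Z) linear_sum; apply: eq_bigr => i _.
by rewrite linear_sum; apply: eq_bigr => j _; rewrite linearZ.
Qed.

Let E_jordan : jordan_matrix_units E.
Proof.
by move=> i j k l; rewrite /E -psi_jordan !mul_delta_mx_cond linearD !linearMn.
Qed.

Let E_neq0 i j : E i j != 0.
Proof.
apply/eqP; rewrite /E -(linear0 psi) => /psi_inj/matrixP/(_ i j)/eqP.
by rewrite !mxE !eqxx oner_eq0.
Qed.

Let E_sandwich j M : exists c, E j j *m M *m E j j = c *: E j j.
Proof.
have [Z <-] := psi_surj M.
exists (\sum_k \sum_l Z k l * ((k == j) && (l == j))%:R).
rewrite psi_expand mulmx_sumr mulmx_suml scaler_suml; apply: eq_bigr => k _.
rewrite mulmx_sumr mulmx_suml scaler_suml; apply: eq_bigr => l _.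
by rewrite -scalemxAr -scalemxAl (jmu_sandwich two_neq0 E_jordan) -scalerA scaler_nat.
Qed.

Theorem jordan_aut_mx_inner_or_tr : exists2 S, S \in unitmx &
  (forall Z, psi Z *m S = S *m Z) \/ (forall Z, psi Z *m S = S *m Z^T).
Proof.
have [EE | EtE] := jordan_matrix_units_split two_neq0 E_jordan E_neq0 E_sandwich.
  have [S S_unit ES] := matrix_units_conj EE (fun i => E_neq0 i i).
  by exists S => //; left => Z; rewrite psi_expand sum_matrix_units_conj.
have [S S_unit ES] := matrix_units_conj EtE (fun i => E_neq0 i i).
exists S => //; right => Z; rewrite psi_expand exchange_big -(sum_matrix_units_conj ES).
by congr (_ *m _); apply: eq_bigr => j _; apply: eq_bigr => i _; rewrite mxE.
Qed.

End JordanAutomorphism.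

Definition trdiag (F : fieldType) m (Z : 'M[F]_m) : 'M[F]_(m + m) := block_mx Z 0 0 Z^T.

Definition swap_form (F : fieldType) m : 'M[F]_(m + m) := block_mx 0 1%:M 1%:M 0.

Lemma trdiag_intertwiner (F : fieldType) m (psi : 'M[F]_m -> 'M[F]_m) S :
  S \in unitmx ->
  (forall Z, psi Z *m S = S *m Z) \/ (forall Z, psi Z *m S = S *m Z^T) ->
  exists D, D^T *m swap_form F m *m D = swap_form F m /\
            forall Z, D *m trdiag Z = trdiag (psi Z) *m D.
Proof.
move=> S_unit; have invS_conj A B : A *m S = S *m B -> invmx S *m A = B *m invmx S.
  move=> AS; rewrite -[invmx S *m A]mulmx1 -(mulmxV S_unit) !mulmxA -(mulmxA _ A) AS.
  by rewrite mulmxA mulVmx // mul1mx.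
case=> psiS; [exists (block_mx S 0 0 (invmx S)^T) | exists (block_mx 0 S (invmx S)^T 0)].
all: split=> [|Z]; rewrite /swap_form /trdiag ?tr_block_mx ?trmx0 ?trmxK !mulmx_block.
all: rewrite !(mul1mx, mulmx1, mul0mx, mulmx0, addr0, add0r).
- by rewrite -trmx_mul mulVmx // trmx1.
- by rewrite psiS -!trmx_mul (invS_conj _ _ (psiS Z)).
- by rewrite -trmx_mul mulVmx // trmx1.
- by rewrite psiS -!trmx_mul (invS_conj _ _ (psiS Z)) trmx_mul trmxK.
Qed.

Section Cayley.
Variables (F : fieldType) (m : nat) (i : F).
Hypotheses (two_neq0 : 2%:R != 0 :> F) (sqr_i : i ^+ 2 = -1).

Definition cayley : 'M[F]_(m + m) := block_mx 1%:M 1%:M i%:M (- i)%:M.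

Definition cayley_inv : 'M[F]_(m + m) := 2^-1 *: block_mx 1%:M (- i)%:M 1%:M i%:M.

Lemma cayley_invK : cayley_inv *m cayley = 1%:M.
Proof.
rewrite /cayley_inv /cayley -scalemxAl mulmx_block !mul1mx -!scalar_mxM -!raddfD /=.
rewrite (scalar_mx_block m m) scale_block_mx !scale_scalar_mx.
by congr block_mx; rewrite -?(raddf0 scalar_mx); congr (_%:M); field: sqr_i.
Qed.

Lemma tr_cayley_mul : cayley^T *m cayley = 2%:R *: swap_form F m.
Proof.
rewrite /cayley /swap_form tr_block_mx !tr_scalar_mx mulmx_block -!scalar_mxM -!raddfD /=.
rewrite scale_block_mx !scale_scalar_mx scaler0.
by congr block_mx; rewrite -?(raddf0 scalar_mx); congr (_%:M); field: sqr_i.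
Qed.

Lemma cayley_inv_swap_form : cayley_inv^T *m swap_form F m *m cayley_inv = 2^-1 *: 1%:M.
Proof.
rewrite /cayley_inv /swap_form [(2^-1 *: _)^T]linearZ /= -!scalemxAl -scalemxAr.
rewrite tr_block_mx !tr_scalar_mx.
rewrite !mulmx_block !(mul1mx, mulmx1, mul0mx, mulmx0, addr0, add0r).
rewrite -!scalar_mxM -!raddfD /= (scalar_mx_block m m) !scale_block_mx !scale_scalar_mx.
rewrite scaler0; congr block_mx;
  by rewrite -?(raddf0 scalar_mx); congr (_%:M); field: sqr_i.
Qed.

Lemma cayley_conjM (X Y : 'M[F]_(m + m)) :
  cayley *m X *m cayley_inv *m (cayley *m Y *m cayley_inv) =
  cayley *m (X *m Y) *m cayley_inv.
Proof. by rewrite !mulmxA -(mulmxA _ cayley_inv) cayley_invK mulmx1 -!mulmxA. Qed.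

Definition to_J (Z : 'M[F]_m) := cayley *m trdiag Z *m cayley_inv.

Definition of_J (X : 'M[F]_(m + m)) := ulsubmx X + i *: ursubmx X.

Lemma to_JE Z : to_J Z = block_mx (2^-1 *: (Z + Z^T)) ((2^-1 * i) *: (Z^T - Z))
                                  ((2^-1 * i) *: (Z - Z^T)) (2^-1 *: (Z + Z^T)).
Proof.
rewrite /to_J /trdiag /cayley /cayley_inv -scalemxAr !mulmx_block.
rewrite !(mul1mx, mulmx1, mul0mx, mulmx0, addr0, add0r, mul_scalar_mx, mul_mx_scalar).
rewrite scale_block_mx; congr block_mx;
  by apply/matrixP => a b; rewrite !mxE; field: sqr_i.
Qed.

Lemma to_J_in_J Z : in_J (to_J Z).
Proof.
exists (2^-1 *: (Z + Z^T)), ((2^-1 * i) *: (Z^T - Z)); split; last split.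
- by apply/matrixP => a b; rewrite !mxE addrC.
- by apply/matrixP => a b; rewrite !mxE; ring.
- by rewrite to_JE; congr block_mx; apply/matrixP => a b; rewrite !mxE; ring.
Qed.

Lemma to_JK : cancel to_J of_J.
Proof.
move=> Z; rewrite /of_J to_JE block_mxKul block_mxKur.
by apply/matrixP => a b; rewrite !mxE; field: sqr_i.
Qed.

Lemma of_JK X : in_J X -> to_J (of_J X) = X.
Proof.
case=> [A [B [A_sym [B_skew ->]]]].
rewrite /of_J block_mxKul block_mxKur to_JE [(_ + _)^T]linearD /= [(_ *: _)^T]linearZ /=.
rewrite A_sym B_skew.
by congr block_mx; apply/matrixP => a b; rewrite !mxE; field: sqr_i.
Qed.

Lemma to_J_is_linear : linear to_J.
Proof.
move=> a Z W; rewrite !to_JE scale_block_mx add_block_mx.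
by congr block_mx; apply/matrixP => x y; rewrite !mxE; ring.
Qed.

Lemma of_J_is_linear : linear of_J.
Proof. by move=> a X Y; apply/matrixP => x y; rewrite !mxE; ring. Qed.

Lemma to_J_jprod Z W : to_J (jprod Z W) = jprod (to_J Z) (to_J W).
Proof.
rewrite /to_J /jprod !cayley_conjM -mulmxDl -mulmxDr scalemxAl scalemxAr.
congr (_ *m _ *m _); rewrite /trdiag !mulmx_block.
rewrite !(mul1mx, mulmx1, mul0mx, mulmx0, addr0, add0r) add_block_mx scale_block_mx.
rewrite !addr0 !scaler0 [(_ *: _)^T]linearZ /= [(_ + _)^T]linearD /= !trmx_mul.
by rewrite [W^T *m Z^T + _]addrC.
Qed.

Lemma anticomm_jprod (X Y : 'M[F]_m) : X *m Y + Y *m X = 2%:R *: jprod X Y.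
Proof. by rewrite /jprod scalerA divff // scale1r. Qed.

Section Transport.
Variable phi : 'M[F]_(m + m) -> 'M[F]_(m + m).
Hypothesis phi_aut : jordan_aut_on (@in_J F m) phi.

Let psi Z := of_J (phi (to_J Z)).

Let to_J_psi Z : to_J (psi Z) = phi (to_J Z).
Proof. by case: phi_aut => phiJ _ _ _ _; rewrite of_JK //; apply/phiJ/to_J_in_J. Qed.

Let psi_is_linear : linear psi.
Proof.
case: phi_aut => _ phiL _ _ _ a Z W.
by rewrite /psi to_J_is_linear (phiL _ _ _ (to_J_in_J Z) (to_J_in_J W)) of_J_is_linear.
Qed.

Let psiL : {linear 'M[F]_m -> 'M[F]_m} :=
  HB.pack psi (GRing.isLinear.Build F _ _ _ psi psi_is_linear).

Let psi_jordan X Y : psiL (X *m Y + Y *m X) = psiL X *m psiL Y + psiL Y *m psiL X.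
Proof.
case: phi_aut => _ _ phiM _ _; rewrite !anticomm_jprod linearZ /=; congr (_ *: _).
rewrite /= /psi to_J_jprod (phiM _ _ (to_J_in_J X) (to_J_in_J Y)).
by rewrite -!to_J_psi -to_J_jprod !to_JK.
Qed.

Let psi_inj : injective psiL.
Proof.
case: phi_aut => _ _ _ phiI _ X Y /= /(congr1 to_J); rewrite !to_J_psi.
by move/phiI => /(_ (to_J_in_J X) (to_J_in_J Y)) /(can_inj to_JK).
Qed.

Let psi_surj Y : exists X, psiL X = Y.
Proof.
case: phi_aut => _ _ _ _ /(_ _ (to_J_in_J Y))[X [JX phiX]].
by exists (of_J X); rewrite /= /psi of_JK // phiX to_JK.
Qed.

Lemma J_aut_orthogonal_extension : exists Q : 'M[F]_(m + m),
  Q^T *m Q = 1%:M /\ forall X, in_J X -> Q *m X *m Q^T = phi X.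
Proof.
have [S S_unit psiS] := jordan_aut_mx_inner_or_tr two_neq0 psi_jordan psi_inj psi_surj.
have [D [D_swap D_conj]] := trdiag_intertwiner S_unit psiS.
pose Q := cayley *m D *m cayley_inv.
have QtQ : Q^T *m Q = 1%:M.
  transitivity (cayley_inv^T *m (D^T *m (cayley^T *m cayley) *m D) *m cayley_inv).
    by rewrite !trmx_mul !mulmxA.
  rewrite tr_cayley_mul -(scalemxAr _ D^T) -(scalemxAl _ _ D) D_swap.
  rewrite -(scalemxAr _ cayley_inv^T) -(scalemxAl _ _ cayley_inv) cayley_inv_swap_form.
  by rewrite scalerA divff // scale1r.
have Q_to_J Z : Q *m to_J Z = to_J (psi Z) *m Q.
  by rewrite /Q /to_J !cayley_conjM D_conj.
exists Q; split=> // X JX; have QQt := mulmx1C QtQ.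
by rewrite -(of_JK JX) Q_to_J -mulmxA QQt mulmx1 to_J_psi.
Qed.

End Transport.
End Cayley.

Lemma orthogonal_conj_jordan_aut (F : fieldType) k (Q : 'M[F]_k) :
  Q^T *m Q = 1%:M -> jordan_aut_on (@symmx F k) (fun X => Q *m X *m Q^T).
Proof.
move=> QtQ; have QQt := mulmx1C QtQ.
have conjM X Y : Q *m X *m Q^T *m (Q *m Y *m Q^T) = Q *m (X *m Y) *m Q^T.
  by rewrite !mulmxA -(mulmxA _ Q^T Q) QtQ mulmx1.
split.
- by move=> X; rewrite /symmx !trmx_mul trmxK mulmxA => ->.
- by move=> a X Y _ _; rewrite mulmxDr mulmxDl -scalemxAr -scalemxAl.
- by move=> X Y _ _; rewrite /jprod !conjM -mulmxDl -mulmxDr scalemxAl scalemxAr.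
- move=> X Y _ _ /(congr1 (fun M => Q^T *m M *m Q)).
  by rewrite !mulmxA QtQ !mul1mx -!mulmxA QtQ !mulmx1.
- move=> Y Y_sym; exists (Q^T *m Y *m Q); split.
    by rewrite /symmx !trmx_mul trmxK Y_sym mulmxA.
  by rewrite !mulmxA QQt mul1mx -!mulmxA QQt mulmx1.
Qed.

Unset Implicit Arguments.

Theorem lemma2p1 (F : closedFieldType) (m : nat) (char2 : (2%:R : F) != 0)
  (phi : 'M[F]_(m + m) -> 'M[F]_(m + m)) :
  jordan_aut_on (@in_J F m) phi ->
  exists Phi : 'M[F]_(m + m) -> 'M[F]_(m + m),
    jordan_aut_on (@symmx F (m + m)) Phi /\
    (forall X, in_J X -> Phi X = phi X).
Proof.
move=> phi_aut; have [i sqr_i] := imaginary_exists F.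
have [Q [QtQ Q_ext]] := J_aut_orthogonal_extension char2 sqr_i phi_aut.
by exists (fun X => Q *m X *m Q^T); split; [exact: orthogonal_conj_jordan_aut |].
Qed.
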